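(* Let $C_1=(S_1,E_1)$ and $C_2=(S_2,E_2)$ be two chains of points in the plane that are separated by a straight line, such that $S_1\cup S_2$ is in convex position and each of $C_1$, $C_2$ is a convex chain, i.e. its vertices appear along it in the order in which they appear on the boundary of the convex hull of $S_1\cup S_2$. Let $\tau\geq 1$ be a real number such that each of $C_1$ and $C_2$ has stretch factor at most $\tau$. Let $E$ be the set of edges returned by the algorithm $\textsc{Matching}(C_1,C_2)$. Then the graph $G=(S_1\cup S_2,\,E_1\cup E_2\cup E)$ is a plane $(2\tau+1)$-spanner for $S_1\cup S_2$ in which each endpoint of $C_1$ and of $C_2$ has degree at most $2$ and every other vertex has degree at most $3$.
   Context: A chain is a sequence of points together with the line segments connecting consecutive points; its vertex set and edge set are $S_i$ and $E_i$. A geometric graph $G$ on a point set has straight-segment edges, each weighted by its Euclidean length; $d_G(u,v)$ is the length of a shortest path between $u$ and $v$ in $G$. $G$ is a $t$-spanner of its vertex set if $d_G(u,v)\le t|uv|$ for all vertices $u,v$; the stretch factor of $G$ (in particular of a chain) is the smallest such $t$. $G$ is plane if no two edges cross. Algorithm $\textsc{Matching}(C_1,C_2)$: if $C_1$ or $C_2$ has no vertices, return $\emptyset$. Otherwise let $(a,b)$, $a\in C_1$, $b\in C_2$, be a pair of vertices minimizing $|ab|$ over all such pairs; removing $a$ from $C_1$ splits it into two sub-chains $C_1',C_1''$, and removing $b$ from $C_2$ splits it into $C_2',C_2''$, where $C_1'$ and $C_2'$ lie on the same side of the line through $a$ and $b$, and $C_1'',C_2''$ on the other side; return $\{ab\}\cup\textsc{Matching}(C_1',C_2')\cup\textsc{Matching}(C_1'',C_2'')$.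 *)

From HB Require Import structures.
From mathcomp Require Import all_boot all_order all_algebra.
Set Implicit Arguments. Unset Strict Implicit. Unset Printing Implicit Defensive.
Import Order.TTheory GRing.Theory Num.Theory.
Local Open Scope ring_scope.

Section Geometry.
Variable R : rcfType.

Definition pt := (R * R)%type.

Definition dist (p q : pt) : R :=
  Num.sqrt ((p.1 - q.1) ^+ 2 + (p.2 - q.2) ^+ 2).

(* orientation: > 0 iff p lies strictly to the left of the directed line a -> b *)
Definition orient (a b p : pt) : R :=
  (b.1 - a.1) * (p.2 - a.2) - (b.2 - a.2) * (p.1 - a.1).

Definition chain_edges (s : seq pt) : seq (pt * pt) := zip s (behead s).

Definition adj (Es : seq (pt * pt)) (u v : pt) : bool :=
  ((u, v) \in Es) || ((v, u) \in Es).

Definition walk_len (u : pt) (p : seq pt) : R :=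
  \sum_(e <- zip (u :: p) p) dist e.1 e.2.

Definition is_spanner (V : seq pt) (Es : seq (pt * pt)) (t : R) : Prop :=
  forall u v, u \in V -> v \in V ->
    exists p : seq pt, [/\ path (adj Es) u p, last u p = v &
                           walk_len u p <= t * dist u v].

Definition on_seg (x : pt) (e : pt * pt) : Prop :=
  exists l : R, [/\ 0 <= l, l <= 1,
     x.1 = e.1.1 + l * (e.2.1 - e.1.1) & x.2 = e.1.2 + l * (e.2.2 - e.1.2)].

Definition same_edge (e f : pt * pt) : Prop := e = f \/ e = (f.2, f.1).

Definition plane (Es : seq (pt * pt)) : Prop :=
  forall e f, e \in Es -> f \in Es -> ~ same_edge e f ->
    forall x, on_seg x e -> on_seg x f ->
      ((x == e.1) || (x == e.2)) && ((x == f.1) || (x == f.2)).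

Definition degree (V : seq pt) (Es : seq (pt * pt)) (v : pt) : nat :=
  count (fun u => (u != v) && adj Es u v) (undup V).

(* L lists the vertices of a convex polygon in counterclockwise order, each
   point being a (strict) vertex: every other point lies strictly to the left
   of each boundary edge x -> next L x *)
Definition convex_cycle (L : seq pt) : Prop :=
  forall x p, x \in L -> p \in L -> p != x -> p != next L x ->
    0 < orient x (next L x) p.

Definition convex_position (S : seq pt) : Prop :=
  exists L, perm_eq L S /\ convex_cycle L.

(* C is a convex chain w.r.t. S: its vertices appear along C in the order in
   which they appear on the boundary of the convex hull of S (a contiguous arc
   of the cyclic boundary order, traversed in either direction) *)
Definition convex_chain (C S : seq pt) : Prop :=
  exists L, [/\ perm_eq L S, convex_cycle L &
                infix C (L ++ L) || infix (rev C) (L ++ L)].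

Definition separated (S1 S2 : seq pt) : Prop :=
  exists a b c : R, (a != 0) || (b != 0) /\
    (forall p, p \in S1 -> 0 < a * p.1 + b * p.2 + c) /\
    (forall p, p \in S2 -> a * p.1 + b * p.2 + c < 0).

(* matching C1 C2 E : E is a possible output of Matching(C1, C2) (any choice
   of a closest pair in case of ties). *)
Inductive matching : seq pt -> seq pt -> seq (pt * pt) -> Prop :=
| matching_nil1 C2 : matching [::] C2 [::]
| matching_nil2 C1 : matching C1 [::] [::]
| matching_step P1 a Q1 P2 b Q2 X1 Y1 X2 Y2 E' E'' :
    (forall x y, x \in P1 ++ a :: Q1 -> y \in P2 ++ b :: Q2 ->
       dist a b <= dist x y) ->
    ((X1, Y1) = (P1, Q1) \/ (X1, Y1) = (Q1, P1)) ->
    ((X2, Y2) = (P2, Q2) \/ (X2, Y2) = (Q2, P2)) ->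
    (forall p, p \in X1 ++ X2 -> 0 < orient a b p) ->
    (forall p, p \in Y1 ++ Y2 -> orient a b p < 0) ->
    matching X1 X2 E' -> matching Y1 Y2 E'' ->
    matching (P1 ++ a :: Q1) (P2 ++ b :: Q2) ((a, b) :: E' ++ E'').

Definition is_endpoint (C : seq pt) (v : pt) : bool :=
  (C != [::]) && ((v == head v C) || (v == last v C)).

End Geometry.

(* Chain edges join consecutive vertices of the convex polygon S1 \cup S2, so no
   segment between two input points crosses them; two matching edges never cross
   because each recursive call of Matching runs strictly on one side of the line
   through the pair it has just matched.  For u in C1 and v in C2, follow the
   recursion down to the closest pair ab that either contains u or v or separates
   them.  In the separating case the chords ab and uv of the convex polygon cross,
   so |ua| + |bv| <= |ab| + |uv| <= 2|uv|; the chain paths from u to a and from b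
   to v plus the edge ab then have length at most (2 tau + 1)|uv|.  A vertex has at
   most two chain neighbours (one at the end of its chain) and at most one
   matching neighbour. *)

From HB Require Import structures.
From mathcomp Require Import all_boot all_order all_algebra ring lra zify complex.
Import Order.TTheory GRing.Theory Num.Theory.
Local Open Scope ring_scope.

Section ConvexMatching.
Set Implicit Arguments. Unset Strict Implicit. Unset Printing Implicit Defensive.
Variable R : rcfType.
Implicit Types (a b c d p q u v w x y z : pt R) (L S : seq (pt R)).
Implicit Types (e f g : pt R * pt R) (E Es : seq (pt R * pt R)).

Lemma pt_eq p q : p.1 = q.1 -> p.2 = q.2 -> p = q.
Proof. by case: p q => [? ?] [? ?] /= -> ->. Qed.

Lemma dist_sym p q : dist p q = dist q p.
Proof. by rewrite /dist; congr Num.sqrt; ring. Qed.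

Lemma dist_ge0 p q : 0 <= dist p q.
Proof. exact: sqrtr_ge0. Qed.

Lemma distpp p : dist p p = 0.
Proof. by rewrite /dist !subrr expr0n /= addr0 sqrtr0. Qed.

Lemma dist_triangle p q r : dist p r <= dist p q + dist q r.
Proof.
have := le_normcD (Complex (p.1 - q.1) (p.2 - q.2)) (Complex (q.1 - r.1) (q.2 - r.2)).
by rewrite /= !addrA !subrK.
Qed.

Lemma on_seg_fst (e : pt R * pt R) : on_seg e.1 e.
Proof. by exists 0; rewrite lexx ler01 !mul0r !addr0. Qed.

Lemma on_seg_snd (e : pt R * pt R) : on_seg e.2 e.
Proof. by exists 1; rewrite lexx ler01 !mul1r ![e.1.1 + _]addrC ![e.1.2 + _]addrC !subrK. Qed.

Lemma on_seg_sym x p q : on_seg x (p, q) -> on_seg x (q, p).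
Proof.
case=> l [l0 l1 /= e1 e2]; exists (1 - l); rewrite /= e1 e2.
by split; rewrite ?subr_ge0 ?gerBl //; ring.
Qed.

Lemma on_seg_pt x p : on_seg x (p, p) -> x = p.
Proof. by case=> l [_ _ /= e1 e2]; apply: pt_eq; rewrite ?e1 ?e2 !subrr mulr0 addr0. Qed.

Lemma dist_on_seg x p q : on_seg x (p, q) -> dist p x + dist x q = dist p q.
Proof.
case=> l [l0 l1 /= e1 e2]; rewrite /dist e1 e2.
set D := (p.1 - q.1) ^+ 2 + (p.2 - q.2) ^+ 2.
have -> : (p.1 - (p.1 + l * (q.1 - p.1))) ^+ 2 + (p.2 - (p.2 + l * (q.2 - p.2))) ^+ 2
  = l ^+ 2 * D by rewrite /D; ring.
have -> : (p.1 + l * (q.1 - p.1) - q.1) ^+ 2 + (p.2 + l * (q.2 - p.2) - q.2) ^+ 2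
  = (1 - l) ^+ 2 * D by rewrite /D; ring.
rewrite (sqrtrM D (sqr_ge0 l)) (sqrtrM D (sqr_ge0 (1 - l))) !sqrtr_sqr.
by rewrite !ger0_norm ?subr_ge0 //; ring.
Qed.

Lemma dist_crossing_le x a b u v : on_seg x (a, b) -> on_seg x (u, v) ->
  dist u a + dist b v <= dist a b + dist u v.
Proof.
move=> /dist_on_seg xab /dist_on_seg xuv.
have := dist_triangle u x a; have := dist_triangle b x v.
rewrite (dist_sym x a) (dist_sym b x); lra.
Qed.

Lemma orient_fst a b : orient a b a = 0.
Proof. by rewrite /orient; ring. Qed.

Lemma orient_snd a b : orient a b b = 0.
Proof. by rewrite /orient; ring. Qed.

Lemma orient_same a p : orient a a p = 0.
Proof. by rewrite /orient; ring. Qed.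

Lemma orient_neq0 a b p : orient a b p != 0 -> [/\ a != b, p != a & p != b].
Proof.
by move=> o; split; apply: contraNneq o => ->; rewrite ?orient_same ?orient_fst ?orient_snd.
Qed.

Lemma orient_diff_sym a b u v :
  orient u v a - orient u v b = orient a b v - orient a b u.
Proof. by rewrite /orient; ring. Qed.

Lemma orient_affine c d y z w (l : R) :
  w.1 = y.1 + l * (z.1 - y.1) -> w.2 = y.2 + l * (z.2 - y.2) ->
  orient c d w = (1 - l) * orient c d y + l * orient c d z.
Proof. by rewrite /orient => -> ->; ring. Qed.

Lemma on_seg_orient_eq0 a b w : on_seg w (a, b) -> orient a b w = 0.
Proof.
by case=> l [_ _ e1 e2]; rewrite (orient_affine a b e1 e2) /= orient_fst orient_snd; ring.
Qed.

Lemma on_seg_orient_ge0 c d (e : pt R * pt R) w : on_seg w e ->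
  0 <= orient c d e.1 -> 0 <= orient c d e.2 -> 0 <= orient c d w.
Proof. by case=> l [l0 l1 e1 e2]; rewrite (orient_affine c d e1 e2); nra. Qed.

Lemma on_seg_orient_gt0 c d (e : pt R * pt R) w : on_seg w e ->
  0 < orient c d e.1 -> 0 < orient c d e.2 -> 0 < orient c d w.
Proof. by case=> l [l0 l1 e1 e2]; rewrite (orient_affine c d e1 e2); nra. Qed.

Lemma on_seg_orient_lt0 c d (e : pt R * pt R) w : on_seg w e ->
  orient c d e.1 < 0 -> orient c d e.2 < 0 -> orient c d w < 0.
Proof. by case=> l [l0 l1 e1 e2]; rewrite (orient_affine c d e1 e2); nra. Qed.

Lemma on_seg_touch_line c d y z w : on_seg w (y, z) -> orient c d w = 0 ->
  0 <= orient c d y -> 0 <= orient c d z ->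
  [\/ w = y /\ orient c d y = 0, w = z /\ orient c d z = 0
    | orient c d y = 0 /\ orient c d z = 0].
Proof.
case=> l [l0 l1 e1 e2]; rewrite (orient_affine c d e1 e2) /= => w0 yge zge.
have [l_eq0|l_neq0] := eqVneq l 0.
  by constructor 1; split; [apply: pt_eq; rewrite ?e1 ?e2 l_eq0 /=; ring | nra].
have [l_eq1|l_neq1] := eqVneq l 1.
  by constructor 2; split; [apply: pt_eq; rewrite ?e1 ?e2 l_eq1 /=; ring | nra].
have lpos : 0 < l by rewrite lt_def l_neq0.
have lsub1 : l < 1 by rewrite lt_def eq_sym l_neq1.
by constructor 3; split; nra.
Qed.

Lemma convex_cycle_orient_ge0 L x p : convex_cycle L -> x \in L -> p \in L ->
  0 <= orient x (next L x) p.
Proof.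
move=> cL xL pL; have [->|px] := eqVneq p x; first by rewrite orient_fst.
have [->|pn] := eqVneq p (next L x); first by rewrite orient_snd.
exact/ltW/cL.
Qed.

Lemma convex_cycle_orient_eq0 L x p : convex_cycle L -> x \in L -> p \in L ->
  orient x (next L x) p = 0 -> p = x \/ p = next L x.
Proof.
move=> cL xL pL o0; have [->|px] := eqVneq p x; first by left.
have [->|pn] := eqVneq p (next L x); first by right.
by move: (cL x p xL pL px pn); rewrite o0 ltxx.
Qed.

Lemma convex_cycle_edge_meet L x y z w : convex_cycle L ->
  x \in L -> y \in L -> z \in L -> y != z -> ~ same_edge (x, next L x) (y, z) ->
  on_seg w (x, next L x) -> on_seg w (y, z) ->
  ((w == x) || (w == next L x)) && ((w == y) || (w == z)).
Proof.
move=> cL xL yL zL yz nsame /on_seg_orient_eq0 w0 wyz; set n := next L x in nsame w0 *.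
have on_line p : p \in L -> orient x n p = 0 -> (p == x) || (p == n).
  by move=> pL /(convex_cycle_orient_eq0 cL xL pL) [->|->]; rewrite eqxx ?orbT.
have [[-> /(on_line _ yL) ->]|[-> /(on_line _ zL) ->]|[y0 z0]] :=
  on_seg_touch_line wyz w0 (convex_cycle_orient_ge0 cL xL yL)
    (convex_cycle_orient_ge0 cL xL zL); rewrite ?eqxx ?orbT //.
exfalso; move: nsame yz; case/orP: (on_line _ yL y0) => /eqP->;
  case/orP: (on_line _ zL z0) => /eqP->; rewrite ?eqxx // => nsame _; apply: nsame;
  by [left|right].
Qed.

Lemma convex_cycle_vertex_off_seg L b a u v x : convex_cycle L ->
  b \in L -> a \in L -> u \in L -> v \in L -> b != a -> b != u -> b != v ->
  on_seg x (u, v) -> ~ on_seg b (x, a).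
Proof.
move=> cL bL aL uL vL ba bu bv xuv bxa; set n := next L b.
have ge0 p : p \in L -> 0 <= orient b n p by exact: convex_cycle_orient_ge0.
have nb : n != b.
  apply/eqP => nbE; have ab : a != b by rewrite eq_sym.
  by move: (cL b a bL aL ab); rewrite -/n nbE ab orient_same ltxx => /(_ isT).
have on_line p : p \in L -> p != b -> orient b n p = 0 -> p = n.
  by move=> pL pb /(convex_cycle_orient_eq0 cL bL pL) [pbE|] //; move: pb; rewrite pbE eqxx.
have touch y z w : y \in L -> z \in L -> y != b -> z != b ->
    on_seg w (y, z) -> orient b n w = 0 -> w = n.
  move=> yL zL yb zb wyz w0.
  have [[-> /on_line->]|[-> /on_line->]|[/on_line yn /on_line zn]] // :=
    on_seg_touch_line wyz w0 (ge0 _ yL) (ge0 _ zL).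
  by move: wyz; rewrite yn // zn // => /on_seg_pt.
have x0 : orient b n x = 0.
  have xge0 := on_seg_orient_ge0 xuv (ge0 _ uL) (ge0 _ vL).
  have [[_ x0]|[baE _]|[x0 _]] // :=
    on_seg_touch_line bxa (orient_fst b n) xge0 (ge0 _ aL).
  by move: ba; rewrite baE eqxx.
have [ub vb ab] : [/\ u != b, v != b & a != b] by rewrite !(eq_sym _ b).
have xn : x = n := touch u v x uL vL ub vb xuv x0.
rewrite xn in bxa.
have nL : n \in L by rewrite mem_next.
have bn := touch n a b nL aL nb ab bxa (orient_fst b n).
by rewrite -bn eqxx in nb.
Qed.

(* Where line [uv] crosses line [ab]: [orient a b] is affine, so it vanishes at
   [u + o1 / (o1 - o2) (v - u)], with [o1], [o2] its values at [u] and [v]. *)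
Definition line_meet a b u v : pt R :=
  ((orient a b u * v.1 - orient a b v * u.1) / (orient a b u - orient a b v),
   (orient a b u * v.2 - orient a b v * u.2) / (orient a b u - orient a b v)).

Lemma line_meetC a b u v : orient a b u != orient a b v ->
  line_meet a b u v = line_meet u v a b.
Proof.
move=> o12; have d1 : orient a b u - orient a b v != 0 by rewrite subr_eq0.
have d2 : orient u v a - orient u v b != 0 by rewrite orient_diff_sym subr_eq0 eq_sym.
by apply: pt_eq; apply/eqP; rewrite /= eqr_div //; apply/eqP; rewrite /orient; ring.
Qed.

Lemma ratio_in01 (s t : R) : s * t <= 0 -> s != t -> 0 <= s / (s - t) <= 1.
Proof.
move=> st0 st; have d : s - t != 0 by rewrite subr_eq0.
have sq : 0 < (s - t) ^+ 2 by rewrite exprn_even_gt0.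
have k : s / (s - t) * (s - t) = s by rewrite mulfVK.
by apply/andP; split; nra.
Qed.

Lemma line_meet_on_seg a b u v : orient a b u * orient a b v <= 0 ->
  orient a b u != orient a b v -> on_seg (line_meet a b u v) (u, v).
Proof.
move=> o12 ne; have /andP [l0 l1] := ratio_in01 o12 ne.
have d : orient a b u - orient a b v != 0 by rewrite subr_eq0.
by exists (orient a b u / (orient a b u - orient a b v)); split => //=; field.
Qed.

Lemma line_meet_off_seg c d y z : 0 < orient c d y * orient c d z ->
  orient c d y != orient c d z ->
  on_seg y (line_meet c d y z, z) \/ on_seg z (line_meet c d y z, y).
Proof.
set oy := orient c d y; set oz := orient c d z => yz ne.
have [oy0 oz0] : oy != 0 /\ oz != 0.
  by split; apply: contraTneq yz => ->; rewrite ?mul0r ?mulr0 ltxx.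
have dyz : oy - oz != 0 by rewrite subr_eq0.
have ratio_gt0 (s t : R) : 0 < s * t -> t != 0 -> 0 < s / t.
  move=> st t0; have -> : s / t = s * t / t ^+ 2 by field.
  by rewrite divr_gt0 // exprn_even_gt0.
have oyz : 0 < oy / oz by apply: ratio_gt0.
case: (lerP (oy / oz) 1) => r.
- left; exists (oy / oz); split; [exact: ltW | exact: r | |];
    by rewrite /= /line_meet -/oy -/oz; field; rewrite oz0 dyz.
- right; exists (oz / oy); split.
  + by rewrite ltW // ratio_gt0 // mulrC.
  + by rewrite -invf_div invf_le1 // ltW.
  all: by rewrite /= /line_meet -/oy -/oz; field; rewrite oy0 dyz.
Qed.

Lemma convex_cycle_chords_meet L a b u v : convex_cycle L ->
  a \in L -> b \in L -> u \in L -> v \in L -> orient a b u * orient a b v < 0 ->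
  exists x, on_seg x (a, b) /\ on_seg x (u, v).
Proof.
move=> cL aL bL uL vL uv.
have o12 : orient a b u != orient a b v.
  by apply: contraTneq uv => ->; rewrite -expr2 ltNge sqr_ge0.
have pq : orient u v a != orient u v b.
  by rewrite -subr_eq0 orient_diff_sym subr_eq0 eq_sym.
have [u0 v0] : orient a b u != 0 /\ orient a b v != 0.
  by split; apply: contraTneq uv => ->; rewrite ?mul0r ?mulr0 ltxx.
have [ab ua ub] := orient_neq0 u0; have [_ va vb] := orient_neq0 v0.
have xuv := line_meet_on_seg (ltW uv) o12.
case: (lerP (orient u v a * orient u v b) 0) => ab_uv.
  exists (line_meet a b u v); split => //.
  by rewrite line_meetC //; exact: line_meet_on_seg.
(* Otherwise line [ab] meets chord [uv] outside segment [ab], so [a] or [b] lies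
   in the triangle spanned by the other one and [u], [v]. *)
exfalso; rewrite line_meetC // in xuv.
have [au av ba bu bv] : [/\ a != u, a != v, b != a, b != u & b != v].
  by rewrite (eq_sym a u) (eq_sym a v) (eq_sym b a) (eq_sym b u) (eq_sym b v).
case: (line_meet_off_seg ab_uv pq) => [a_seg|b_seg].
- exact: (convex_cycle_vertex_off_seg cL aL bL uL vL ab au av xuv a_seg).
- exact: (convex_cycle_vertex_off_seg cL bL aL uL vL ba bu bv xuv b_seg).
Qed.

Lemma mem_cat_sides (P Q X Y : seq (pt R)) a u :
  (X, Y) = (P, Q) \/ (X, Y) = (Q, P) ->
  (u \in P ++ a :: Q) = [|| u == a, u \in X | u \in Y].
Proof.
by case=> -[-> ->]; rewrite mem_cat inE; case: (u == a); case: (u \in P); case: (u \in Q).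
Qed.

Lemma matching_mem (C1 C2 : seq (pt R)) E e : matching C1 C2 E -> e \in E ->
  e.1 \in C1 /\ e.2 \in C2.
Proof.
move=> hM; elim: hM e => // P1 a Q1 P2 b Q2 X1 Y1 X2 Y2 E' E'' _ s1 s2 _ _ _ IH' _ IH'' e.
rewrite inE mem_cat !(mem_cat_sides _ _ s1) !(mem_cat_sides _ _ s2).
by case/orP => [/eqP-> | /orP [/IH' | /IH''] [-> ->]]; rewrite ?eqxx ?orbT.
Qed.

Lemma matching_noncrossing (C1 C2 : seq (pt R)) E e f x : matching C1 C2 E ->
  e \in E -> f \in E -> on_seg x e -> on_seg x f -> e = f.
Proof.
move=> hM; elim: hM e f => // P1 a Q1 P2 b Q2 X1 Y1 X2 Y2 E' E'' _ _ _ pos neg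
  hM' IH' hM'' IH'' e f.
have side g : g \in (a, b) :: E' ++ E'' -> on_seg x g ->
    [\/ g = (a, b) /\ orient a b x = 0, g \in E' /\ 0 < orient a b x
      | g \in E'' /\ orient a b x < 0].
  rewrite inE mem_cat => /orP [/eqP-> /on_seg_orient_eq0 x0|/orP [gE|gE] xg].
  - by constructor 1.
  - have [g1 g2] := matching_mem hM' gE.
    by constructor 2; split; rewrite // (on_seg_orient_gt0 xg) // pos // mem_cat ?g1 ?g2 ?orbT.
  - have [g1 g2] := matching_mem hM'' gE.
    by constructor 3; split; rewrite // (on_seg_orient_lt0 xg) // neg // mem_cat ?g1 ?g2 ?orbT.
move=> eE fE xe xf.
case: (side e eE xe) (side f fE xf) => [[-> o]|[e' o]|[e'' o]] [[-> o']|[f' o']|[f'' o']] //;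
  try by exfalso; lra.
- exact: IH' e' f' xe xf.
- exact: IH'' e'' f'' xe xf.
Qed.

Lemma uniq_cat_notin (S1 S2 : seq (pt R)) p : uniq (S1 ++ S2) -> p \in S1 -> p \notin S2.
Proof.
by rewrite cat_uniq => /and3P [_ /hasPn h _] p1; apply/negP => /h; rewrite p1.
Qed.

Lemma matching_adj_uniq (C1 C2 : seq (pt R)) E u u' v : uniq (C1 ++ C2) ->
  matching C1 C2 E -> adj E u v -> adj E u' v -> u = u'.
Proof.
move=> uC hM; have C12 p : p \in C1 -> p \in C2 -> False.
  by move=> p1 p2; move: (uniq_cat_notin uC p1); rewrite p2.
case/orP => e /orP [] f.
- by case: (matching_noncrossing hM e f (on_seg_snd (u, v)) (on_seg_snd (u', v))).
- by case: (C12 v (matching_mem hM f).1 (matching_mem hM e).2).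
- by case: (C12 v (matching_mem hM e).1 (matching_mem hM f).2).
- by case: (matching_noncrossing hM e f (on_seg_fst (v, u)) (on_seg_fst (v, u'))).
Qed.

Lemma matching_short_edge L (C1 C2 : seq (pt R)) E u v : convex_cycle L ->
  {subset C1 <= L} -> {subset C2 <= L} -> matching C1 C2 E -> u \in C1 -> v \in C2 ->
  exists a b, [/\ (a, b) \in E, dist a b <= dist u v & dist u a + dist b v <= 2 * dist u v].
Proof.
move=> cL + + hM; elim: hM u v => // P1 a Q1 P2 b Q2 X1 Y1 X2 Y2 E' E'' ab_min s1 s2 pos neg
  _ IH' _ IH'' u v sC1 sC2 uC vC.
have ab_uv := ab_min u v uC vC.
have [aL bL] : a \in L /\ b \in L.
  by split; [apply: sC1 | apply: sC2]; rewrite mem_cat mem_head orbT.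
have ab_edge : dist u a + dist b v <= 2 * dist u v ->
    exists a' b', [/\ (a', b') \in (a, b) :: E' ++ E'', dist a' b' <= dist u v
                    & dist u a' + dist b' v <= 2 * dist u v].
  by exists a, b; rewrite mem_head.
have cross : orient a b u * orient a b v < 0 -> dist u a + dist b v <= 2 * dist u v.
  move=> /(convex_cycle_chords_meet cL aL bL (sC1 _ uC) (sC2 _ vC)) [x [xab xuv]].
  by have := dist_crossing_le xab xuv; lra.
have [sX1 sY1] : {subset X1 <= L} /\ {subset Y1 <= L}.
  by split=> p p_in; apply: sC1; rewrite (mem_cat_sides _ _ s1) p_in ?orbT.
have [sX2 sY2] : {subset X2 <= L} /\ {subset Y2 <= L}.
  by split=> p p_in; apply: sC2; rewrite (mem_cat_sides _ _ s2) p_in ?orbT.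
have uC' : [|| u == a, u \in X1 | u \in Y1] by rewrite -(mem_cat_sides _ _ s1).
have vC' : [|| v == b, v \in X2 | v \in Y2] by rewrite -(mem_cat_sides _ _ s2).
case/or3P: uC' => [/eqP ua|uX|uY].
  apply: ab_edge; rewrite ua distpp add0r; move: ab_uv; rewrite ua.
  by have := dist_triangle b a v; rewrite (dist_sym b a); lra.
case/or3P: vC' => [/eqP vb|vX|vY].
- apply: ab_edge; rewrite vb distpp addr0; move: ab_uv; rewrite vb.
  by have := dist_triangle u b a; rewrite (dist_sym b a); lra.
- have [a' [b' [abE ab' uabv]]] := IH' u v sX1 sX2 uX vX.
  by exists a', b'; rewrite inE mem_cat abE orbT.
- have ou : 0 < orient a b u by apply: pos; rewrite mem_cat uX.
  have ov : orient a b v < 0 by apply: neg; rewrite mem_cat vY orbT.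
  by apply/ab_edge/cross; rewrite pmulr_rlt0.
case/or3P: vC' => [/eqP vb|vX|vY].
- apply: ab_edge; rewrite vb distpp addr0; move: ab_uv; rewrite vb.
  by have := dist_triangle u b a; rewrite (dist_sym b a); lra.
- have ou : orient a b u < 0 by apply: neg; rewrite mem_cat uY.
  have ov : 0 < orient a b v by apply: pos; rewrite mem_cat vX orbT.
  by apply/ab_edge/cross; rewrite nmulr_rlt0.
- have [a' [b' [abE ab' uabv]]] := IH'' u v sY1 sY2 uY vY.
  by exists a', b'; rewrite inE mem_cat abE !orbT.
Qed.

Lemma adj_sub A B u v : {subset A <= B} -> adj A u v -> adj B u v.
Proof. by rewrite /adj => sAB /orP [] /sAB ->; rewrite ?orbT. Qed.

Lemma walk_len_cat u (p r : seq (pt R)) :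
  walk_len u (p ++ r) = walk_len u p + walk_len (last u p) r.
Proof.
rewrite /walk_len; elim: p u => [|x p IH] u /=; first by rewrite big_nil add0r.
by rewrite !big_cons IH addrA.
Qed.

Lemma walk_len_cons u x (p : seq (pt R)) : walk_len u (x :: p) = dist u x + walk_len x p.
Proof. by rewrite /walk_len /= big_cons. Qed.

(* [is_spanner V Es t] unfolds to [walk_within Es u v (t * dist u v)] for [u], [v] in [V]. *)
Definition walk_within Es u v (l : R) : Prop :=
  exists p : seq (pt R), [/\ path (adj Es) u p, last u p = v & walk_len u p <= l].

Lemma walk_within_le Es u v (l l' : R) : l <= l' ->
  walk_within Es u v l -> walk_within Es u v l'.
Proof. by move=> ll' [p [pP pl pw]]; exists p; split => //; apply: le_trans ll'. Qed.

Lemma walk_within_sub A B u v (l : R) : {subset A <= B} ->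
  walk_within A u v l -> walk_within B u v l.
Proof.
move=> sAB [p [pP pl pw]]; exists p; split => //.
by apply: sub_path pP => x y; apply: adj_sub.
Qed.

Lemma walk_within_bridge Es u a b v (l1 l2 : R) :
  walk_within Es u a l1 -> adj Es a b -> walk_within Es b v l2 ->
  walk_within Es u v (l1 + dist a b + l2).
Proof.
move=> [p [pP pl pw]] ab [r [rP rl rw]]; exists (p ++ b :: r); split.
- by rewrite cat_path pP pl /= ab rP.
- by rewrite last_cat /= rl.
- by rewrite walk_len_cat pl walk_len_cons; lra.
Qed.

Lemma matching_spanner L (S1 S2 : seq (pt R)) E (t : R) : convex_cycle L ->
  {subset S1 ++ S2 <= L} -> 1 <= t ->
  is_spanner S1 (chain_edges S1) t -> is_spanner S2 (chain_edges S2) t ->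
  matching S1 S2 E ->
  is_spanner (S1 ++ S2) (chain_edges S1 ++ chain_edges S2 ++ E) (2 * t + 1).
Proof.
move=> cL sL t1 sp1 sp2 hM; set Es := chain_edges S1 ++ _.
have [sL1 sL2] : {subset S1 <= L} /\ {subset S2 <= L}.
  by split=> p pS; apply: sL; rewrite mem_cat pS ?orbT.
have [sub1 sub2 subE] :
    [/\ {subset chain_edges S1 <= Es}, {subset chain_edges S2 <= Es} & {subset E <= Es}].
  by split=> g gE; rewrite !mem_cat gE ?orbT.
have stretch u v : walk_within Es u v (t * dist u v) ->
    walk_within Es u v ((2 * t + 1) * dist u v).
  by apply: walk_within_le; have := dist_ge0 u v; nra.
have bridge u a b v : walk_within Es u a (t * dist u a) -> adj Es a b ->
    walk_within Es b v (t * dist b v) ->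
    dist a b <= dist u v -> dist u a + dist b v <= 2 * dist u v ->
    walk_within Es u v ((2 * t + 1) * dist u v).
  move=> ua ab bv abl uabv; apply: walk_within_le (walk_within_bridge ua ab bv).
  by have := dist_ge0 u a; have := dist_ge0 b v; nra.
move=> u v; rewrite !mem_cat => /orP [uS|uS] /orP [vS|vS].
- exact/stretch/(walk_within_sub sub1)/sp1.
- have [a [b [abE abl uabv]]] := matching_short_edge cL sL1 sL2 hM uS vS.
  have [aS bS] := matching_mem hM abE.
  apply: (bridge u a b v) => //.
  + exact: walk_within_sub sub1 (sp1 u a uS aS).
  + by apply: (adj_sub subE); rewrite /adj abE.
  + exact: walk_within_sub sub2 (sp2 b v bS vS).
- have [a [b [abE abl vabu]]] := matching_short_edge cL sL1 sL2 hM vS uS.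
  have [aS bS] := matching_mem hM abE.
  apply: (bridge u b a v).
  + exact: walk_within_sub sub2 (sp2 u b uS bS).
  + by apply: (adj_sub subE); rewrite /adj abE orbT.
  + exact: walk_within_sub sub1 (sp1 a v aS vS).
  + by rewrite dist_sym (dist_sym u v).
  + by rewrite addrC (dist_sym u b) (dist_sym a v) (dist_sym u v).
- exact/stretch/(walk_within_sub sub2)/sp2.
Qed.

Lemma sorted_chain_edges (r : rel (pt R)) S e : sorted r S -> e \in chain_edges S -> r e.1 e.2.
Proof.
case: S => [|x s] //=; elim: s x => [|y s IH] x //= /andP [rxy rs].
by rewrite inE => /orP [/eqP-> //|]; exact: IH.
Qed.

Lemma sorted_next_cat L : uniq L -> sorted (fun x y => next L x == y) (L ++ L).
Proof.
move=> uL; have := cycle_next uL; case: L uL => [|x c] //= _.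
rewrite -cat_rcons cat_path last_rcons => xc; rewrite xc /=.
by move: xc; rewrite rcons_path => /andP [].
Qed.

Lemma convex_chain_edge S V e : uniq V -> convex_chain S V -> e \in chain_edges S ->
  exists2 L, perm_eq L V /\ convex_cycle L & e.2 = next L e.1 \/ e.1 = next L e.2.
Proof.
move=> uV [L [pL cL iS]] eS; exists L => //.
have sLL := sorted_next_cat (etrans (perm_uniq pL) uV).
case/orP: iS => /infix_sorted/(_ sLL) sS.
- by left; apply/esym/eqP; exact: sorted_chain_edges sS eS.
- by right; move: sS; rewrite rev_sorted => /sorted_chain_edges/(_ eS)/eqP.
Qed.

Lemma convex_cycle_hull_edge_meet L e f w : convex_cycle L ->
  e.1 \in L -> e.2 \in L -> e.2 = next L e.1 \/ e.1 = next L e.2 ->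
  f.1 \in L -> f.2 \in L -> f.1 != f.2 -> ~ same_edge e f ->
  on_seg w e -> on_seg w f -> ((w == e.1) || (w == e.2)) && ((w == f.1) || (w == f.2)).
Proof.
case: e f => [p q] [y z] /= cL pL qL [->|->] yL zL yz nsame we wf.
- exact: convex_cycle_edge_meet.
- rewrite orbC; apply: convex_cycle_edge_meet wf => //; last exact: on_seg_sym.
  by move=> same; apply: nsame; case: same => -[<- <-]; [right|left].
Qed.

Lemma chain_edges_mem S e : uniq S -> e \in chain_edges S ->
  [/\ e.1 \in S, e.2 \in S & e.1 != e.2].
Proof.
case: S => [|x s] //=; elim: s x => [|y s IH] x //= /andP [xys uys].
rewrite inE => /orP [/eqP-> /= | /(IH _ uys) [e1 e2 e12]].
- split; [exact: mem_head | by rewrite inE mem_head orbT |].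
  by apply: contraNneq xys => ->; exact: mem_head.
- by split => //; rewrite inE ?e1 ?e2 orbT.
Qed.

Lemma plane_chains_matching (S1 S2 : seq (pt R)) E : uniq (S1 ++ S2) ->
  convex_chain S1 (S1 ++ S2) -> convex_chain S2 (S1 ++ S2) -> matching S1 S2 E ->
  plane (chain_edges S1 ++ chain_edges S2 ++ E).
Proof.
move=> uS ch1 ch2 hM; set Es := chain_edges S1 ++ _.
have Es_pts g : g \in Es -> [/\ g.1 \in S1 ++ S2, g.2 \in S1 ++ S2 & g.1 != g.2].
  have [uS1 uS2] : uniq S1 /\ uniq S2 by move: uS; rewrite cat_uniq => /and3P [-> _ ->].
  case: g => p q; rewrite !mem_cat => /or3P [] pq /=.
  - by have [p1 q1 ->] := chain_edges_mem uS1 pq; rewrite p1 q1.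
  - by have [p2 q2 ->] := chain_edges_mem uS2 pq; rewrite p2 q2 !orbT.
  - have [p1 q2] := matching_mem hM pq; rewrite p1 q2 orbT; split => //.
    by apply: contraTneq q2 => <-; exact: uniq_cat_notin uS p1.
have hull g f w : g \in chain_edges S1 ++ chain_edges S2 -> f \in Es ->
    ~ same_edge g f -> on_seg w g -> on_seg w f ->
    ((w == g.1) || (w == g.2)) && ((w == f.1) || (w == f.2)).
  move=> gC fEs ngf wg wf.
  have [L [pL cL] gL] : exists2 L, perm_eq L (S1 ++ S2) /\ convex_cycle L &
      g.2 = next L g.1 \/ g.1 = next L g.2.
    by move: (gC); rewrite mem_cat => /orP [];
      [exact: convex_chain_edge uS ch1 | exact: convex_chain_edge uS ch2].
  have gEs : g \in Es by rewrite /Es catA mem_cat gC.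
  have [g1 g2 _] := Es_pts g gEs.
  have [f1 f2 f12] := Es_pts f fEs.
  by apply: (convex_cycle_hull_edge_meet cL) => //; rewrite (perm_mem pL).
move=> e f eEs fEs nef w we wf.
case eC: (e \in chain_edges S1 ++ chain_edges S2); first exact: hull.
case fC: (f \in chain_edges S1 ++ chain_edges S2).
  rewrite andbC; apply: hull => // same; apply: nef.
  by case: same => ->; [left | right; case: (e)].
have [eE fE] : e \in E /\ f \in E.
  by move: eEs fEs; rewrite /Es catA mem_cat eC mem_cat fC.
by case: nef; left; exact: matching_noncrossing hM eE fE we wf.
Qed.

Lemma degree_le_count V Es v : (degree V Es v <= count (adj Es ^~ v) (undup V))%N.
Proof. by apply: sub_count => u /andP []. Qed.

Lemma count_adj_cat A B v s :
  (count (adj (A ++ B) ^~ v) s <= count (adj A ^~ v) s + count (adj B ^~ v) s)%N.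
Proof.
rewrite -count_predUI; apply: leq_trans (leq_addr _ _); apply: sub_count => u.
by rewrite /adj !mem_cat /= orbACA.
Qed.

Lemma count_adj_le Es v s : uniq s ->
  (count (adj Es ^~ v) s <= count_mem v (unzip1 Es) + count_mem v (unzip2 Es))%N.
Proof.
move=> us; rewrite -size_filter.
have sub : {subset filter (adj Es ^~ v) s <=
    [seq e.2 | e <- Es & e.1 == v] ++ [seq e.1 | e <- Es & e.2 == v]}.
  move=> u; rewrite mem_filter mem_cat => /andP [/orP [uv|vu] _]; apply/orP.
  - by right; apply/mapP; exists (u, v); rewrite // mem_filter /= eqxx.
  - by left; apply/mapP; exists (v, u); rewrite // mem_filter /= eqxx.
apply: leq_trans (uniq_leq_size (filter_uniq _ us) sub) _.
by rewrite size_cat !size_map !size_filter !count_map.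
Qed.

Lemma unzip1_zip_behead x (s : seq (pt R)) : unzip1 (zip (x :: s) s) = belast x s.
Proof. by elim: s x => [|y s IH] x //=; rewrite IH. Qed.

Lemma is_endpoint_mem S v : is_endpoint S v -> v \in S.
Proof. by case: S => //= x s /orP [] /eqP-> /=; rewrite ?mem_head ?mem_last. Qed.

Lemma chain_count_adj S v s : uniq S -> uniq s ->
  (count (adj (chain_edges S) ^~ v) s <= (v \in S) * (2 - is_endpoint S v))%N.
Proof.
move=> uS us; apply: leq_trans (count_adj_le _ v us) _.
case: S uS => [|x t] //= /andP [xt ut].
have ubt : uniq (rcons (belast x t) (last x t)) by rewrite -lastI /= xt.
rewrite unzip1_zip_behead unzip2_zip // !count_uniq_mem //; last first.
  by move: ubt; rewrite rcons_uniq => /andP [].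
have -> : (v \in t) = (v \in x :: t) && (v != x).
  by rewrite inE; case: eqP => [->|]; rewrite ?(negbTE xt) ?andbT.
have -> : (v \in belast x t) = (v \in x :: t) && (v != last x t).
  rewrite lastI mem_rcons inE; case: eqP => [->|]; rewrite ?andbT //.
  by move: ubt; rewrite rcons_uniq => /andP [/negbTE ->].
by rewrite /is_endpoint /=; case: (v \in x :: t); case: (v == x); case: (v == last x t).
Qed.

Lemma count_le1 (T : eqType) (P : pred T) (s : seq T) : uniq s ->
  (forall i j, P i -> P j -> i = j) -> (count P s <= 1)%N.
Proof.
move=> us Puniq; rewrite -size_filter.
case fs: (filter P s) => [|i [|j r]] //.
have : uniq (filter P s) := filter_uniq P us.
have [Pi Pj] : P i /\ P j.
  have : i \in filter P s by rewrite fs mem_head.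
  have : j \in filter P s by rewrite fs inE mem_head orbT.
  by rewrite !mem_filter => /andP [Pj _] /andP [Pi _].
by rewrite fs /= inE (Puniq i j Pi Pj) eqxx.
Qed.

Lemma matching_count_adj (C1 C2 : seq (pt R)) E v s : uniq (C1 ++ C2) ->
  matching C1 C2 E -> uniq s -> (count (adj E ^~ v) s <= 1)%N.
Proof. by move=> uC hM us; apply: count_le1 us _ => u u'; exact: matching_adj_uniq uC hM. Qed.

Lemma degree_chains_matching (S1 S2 : seq (pt R)) E v : uniq (S1 ++ S2) ->
  matching S1 S2 E -> v \in S1 ++ S2 ->
  (degree (S1 ++ S2) (chain_edges S1 ++ chain_edges S2 ++ E) v <=
     (if is_endpoint S1 v || is_endpoint S2 v then 2 else 3))%N.
Proof.
move=> uS hM vS; have [uS1 uS2] : uniq S1 /\ uniq S2.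
  by move: uS; rewrite cat_uniq => /and3P [-> _ ->].
apply: leq_trans (degree_le_count _ _ _) _.
set s := undup _; have us : uniq s := undup_uniq _.
have d1 := chain_count_adj v uS1 us; have d2 := chain_count_adj v uS2 us.
have dE := matching_count_adj v uS hM us.
have cat1 := count_adj_cat (chain_edges S1) (chain_edges S2 ++ E) v s.
have cat2 := count_adj_cat (chain_edges S2) E v s.
have not_end S p : p \notin S -> is_endpoint S p = false.
  by move=> pS; apply: contraNF pS; exact: is_endpoint_mem.
move: vS; rewrite mem_cat => /orP [v1|v2].
- have v2 : v \notin S2 := uniq_cat_notin uS v1.
  move: d1 d2; rewrite v1 (negbTE v2) (not_end _ _ v2) orbF mul1n mul0n leqn0 => d1 /eqP d2.
  by case: (is_endpoint S1 v) d1 => /= d1; lia.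
- have v1 : v \notin S1 by apply: (@uniq_cat_notin S2); rewrite // uniq_catC.
  move: d1 d2; rewrite v2 (negbTE v1) (not_end _ _ v1) mul1n mul0n leqn0 => /eqP d1 d2.
  by case: (is_endpoint S2 v) d2 => /= d2; lia.
Qed.

End ConvexMatching.

Theorem theorem2 (R : rcfType) (S1 S2 : seq (pt R)) (tau : R)
    (E : seq (pt R * pt R)) :
  uniq (S1 ++ S2) ->
  separated S1 S2 ->
  convex_position (S1 ++ S2) ->
  convex_chain S1 (S1 ++ S2) ->
  convex_chain S2 (S1 ++ S2) ->
  1 <= tau ->
  is_spanner S1 (chain_edges S1) tau ->
  is_spanner S2 (chain_edges S2) tau ->
  matching S1 S2 E ->
  let Es := chain_edges S1 ++ chain_edges S2 ++ E in
  [/\ plane Es,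
      is_spanner (S1 ++ S2) Es (2 * tau + 1) &
      forall v, v \in S1 ++ S2 ->
        (degree (S1 ++ S2) Es v <=
           (if is_endpoint S1 v || is_endpoint S2 v then 2 else 3))%N].
Proof.
move=> uS _ [L [pL cL]] ch1 ch2 t1 sp1 sp2 hM Es; split.
- exact: plane_chains_matching uS ch1 ch2 hM.
- by apply: matching_spanner cL _ t1 sp1 sp2 hM => p; rewrite (perm_mem pL).
- by move=> v; exact: degree_chains_matching uS hM.
Qed.
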